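(* For $s\in\mathbb{D}^+_{21/4}$ let $r_1(s),r_2(s),r_3(s)$ be the roots of $P_s(u)=u^3/3+u^2+s$ labeled as described in the context. Then: (i) For all $s\in\mathbb{D}^+_{21/4}$ we have $r_3(s),r_1(s)\in\mathbb{D}^-_5$ and $r_2(s)\in\mathbb{D}^+_5$. (ii) Let $\hat{\mathcal{C}}_0$ be the polygon with vertices $-1,\,-1-6i,\,6-6i,\,6+6i,\,-6+6i,\,-6,\,-1$, oriented anticlockwise. Then for $s\in\mathbb{D}^+_{21/4}$, $r_2(s),r_3(s)$ lie in the interior of $\hat{\mathcal{C}}_0$ while $r_1(s)$ lies in its exterior. (iii) For all $s\in\mathbb{D}^+_{21/4}$ the closed path $\mathcal{C}$ (defined in the context) encloses $r_1(s)$ and $r_3(s)$ and leaves $r_2(s)$ outside. Moreover $$\alpha:=\sup_{u\in\mathcal{C},\ s\in\mathbb{D}^+_{21/4}}|J(u,s)|<\infty,\qquad J(u,s)=\int_{u_0}^u R(v,s)\,dv,$$ where the integral is taken along $\mathcal{C}$.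
   Context: $\mathbb{H}$ is the open upper half plane; $\mathbb{D}^+_\rho=\{s\in\mathbb{H}:|s|<\rho\}$ and $\mathbb{D}^-_\rho=\{s\in-\mathbb{H}:|s|<\rho\}$. For $s\in\mathbb{H}$ the polynomial $P_s$ has distinct roots, exactly one of which, $r_2(s)$, lies in $\mathbb{H}$; the other two lie in the lower half plane, $r_1(s)$ having real part $<-2$ and $r_3(s)$ having positive real part. The path $\mathcal{C}$ consists of the polygonal line connecting successively $6,\ \frac{1+i}{3},\ -(1+i),\ -2+\frac{-1+i}{3},\ -3+\frac{i}{3},\ u_0,\ -6$, with $u_0=-4$, closed by the semicircle of radius $6$ centered at the origin in the lower half plane. $R(v,s)=\sqrt{v^3/3+v^2+s}$, taken as a continuous branch along $\mathcal{C}$ starting at $u_0$. *)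

From Stdlib Require Import Reals.
From Coquelicot Require Import Coquelicot.
Open Scope R_scope.

Definition P (s u : C) : C := (u * u * u / 3 + u * u + s)%C.

Definition DDplus (rho : R) (s : C) : Prop := 0 < Im s /\ Cmod s < rho.
Definition DDminus (rho : R) (s : C) : Prop := Im s < 0 /\ Cmod s < rho.

Definition labelled_roots (s r1 r2 r3 : C) : Prop :=
  (forall u : C, P s u = (/ 3 * ((u - r1) * (u - r2) * (u - r3)))%C) /\
  r1 <> r2 /\ r1 <> r3 /\ r2 <> r3 /\
  0 < Im r2 /\
  Im r1 < 0 /\ Re r1 < -2 /\
  Im r3 < 0 /\ 0 < Re r3.

Definition segment (a b : C) (z : C) : Prop :=
  exists t : R, 0 <= t <= 1 /\ z = (a + RtoC t * (b - a))%C.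

Definition connected_set (A : C -> Prop) : Prop :=
  forall U V : C -> Prop, open U -> open V ->
    (forall z, A z -> U z \/ V z) ->
    (exists z, A z /\ U z) -> (exists z, A z /\ V z) ->
    exists z, A z /\ U z /\ V z.

(** z lies in a bounded connected component of the complement of Gamma. *)
Definition inside (Gamma : C -> Prop) (z : C) : Prop :=
  ~ Gamma z /\
  exists M : R, forall K : C -> Prop,
    connected_set K -> K z -> (forall w, K w -> ~ Gamma w) ->
    forall w, K w -> Cmod w <= M.

(** z lies in an unbounded connected component of the complement of Gamma. *)
Definition outside (Gamma : C -> Prop) (z : C) : Prop :=
  ~ Gamma z /\
  forall M : R, exists K : C -> Prop,
    connected_set K /\ K z /\ (forall w, K w -> ~ Gamma w) /\
    exists w, K w /\ M < Cmod w.

Definition C0hat (z : C) : Prop :=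
  segment (-1, 0) (-1, -6) z \/ segment (-1, -6) (6, -6) z \/
  segment (6, -6) (6, 6) z \/ segment (6, 6) (-6, 6) z \/
  segment (-6, 6) (-6, 0) z \/ segment (-6, 0) (-1, 0) z.

(** Parametrisation of the closed path \mathcal C on [0,7], starting at
    u0 = -4:  [0,1]: segment u0 -> -6;  [1,2]: lower semicircle of radius 6
    from -6 to 6 (6 e^{i pi t});  [2,3],...,[6,7]: the polygonal line
    6 -> (1+i)/3 -> -(1+i) -> -2+(-1+i)/3 -> -3+i/3 -> u0. *)
Definition u0 : C := (-4, 0).
Definition lerp (a b : C) (t : R) : C := (a + RtoC t * (b - a))%C.

Definition v1 : C := (1/3, 1/3).
Definition v2 : C := (-1, -1).
Definition v3 : C := (-2 - 1/3, 1/3).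
Definition v4 : C := (-3, 1/3).

Definition gamma (t : R) : C :=
  if Rle_dec t 1 then lerp u0 (-6, 0) t
  else if Rle_dec t 2 then (6 * cos (PI * t), 6 * sin (PI * t))
  else if Rle_dec t 3 then lerp (6, 0) v1 (t - 2)
  else if Rle_dec t 4 then lerp v1 v2 (t - 3)
  else if Rle_dec t 5 then lerp v2 v3 (t - 4)
  else if Rle_dec t 6 then lerp v3 v4 (t - 5)
  else lerp v4 u0 (t - 6).

(** Its derivative (valid off the break points 1,...,6). *)
Definition dgamma (t : R) : C :=
  if Rle_dec t 1 then ((-6, 0) - u0)%C
  else if Rle_dec t 2 then (- 6 * PI * sin (PI * t), 6 * PI * cos (PI * t))
  else if Rle_dec t 3 then (v1 - (6, 0))%C
  else if Rle_dec t 4 then (v2 - v1)%C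
  else if Rle_dec t 5 then (v3 - v2)%C
  else if Rle_dec t 6 then (v4 - v3)%C
  else (u0 - v4)%C.

Definition Cpath (z : C) : Prop := exists t, 0 <= t <= 7 /\ z = gamma t.

(** A continuous branch of R(v,s) = sqrt(v^3/3+v^2+s) along \mathcal C
    (starting at u0 = gamma 0): a function of the parameter t in [0,7],
    continuous on [0,7], whose square is P_s(gamma t). *)
Definition branch (s : C) (w : R -> C) : Prop :=
  (forall t, 0 <= t <= 7 ->
     filterlim w (within (fun u => 0 <= u <= 7) (locally t)) (locally (w t))) /\
  (forall t, 0 <= t <= 7 -> (w t * w t)%C = P s (gamma t)).

(** J(gamma t, s) = \int_{u0}^{gamma t} R(v,s) dv along \mathcal C. *)
Definition CRInt (f : R -> C) (a b : R) : C :=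
  (RInt (fun x => Re (f x)) a b, RInt (fun x => Im (f x)) a b).
Definition J (w : R -> C) (t : R) : C :=
  CRInt (fun tau => (w tau * dgamma tau)%C) 0 t.

From Stdlib Require Import Reals Lra Lia Psatz Classical.
From Coquelicot Require Import Coquelicot.
Open Scope R_scope.

(* The imaginary part of P_s(x + iy) is y (x^2 + 2x - y^2/3) + Im s, so for
   Im s > 0 a root in the upper half plane satisfies x^2 + 2x < y^2/3, one in
   the lower half plane the reverse inequality, and all roots satisfy |r| < 5.
   Off the lower semicircle, the path C is the graph of a piecewise linear
   function over [-6, 6]; hence the complements of C and of \hat C_0 split into
   explicit bounded and unbounded open sets, and these inequalities place each
   root in one of them (a root is shown to be outside by a ray avoiding the
   curve).  They also show that P_s has no zero on C, so P_s o gamma has a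
   continuous square root on [0, 7]: local square roots c sqrt (P_s / P_s(t0))
   extend to the whole interval by a supremum argument.  Since |gamma| <= 6,
   every such branch is bounded by sqrt 114, which bounds J uniformly. *)

(** * The cubic and the path *)

Lemma P_coords (a b x y : R) : P (a, b) (x, y) =
  (x^3/3 - x*y^2 + x^2 - y^2 + a, x^2*y - y^3/3 + 2*x*y + b).
Proof. unfold P, Cdiv, Cmult, Cplus, Cinv, RtoC; simpl; f_equal; field. Qed.

Lemma Cmod_coords (x y : R) : Cmod (x, y) = sqrt (x*x + y*y).
Proof. unfold Cmod; simpl; f_equal; ring. Qed.

Lemma Cmod_lt_sqr (x y r : R) : Cmod (x, y) < r -> x*x + y*y < r*r.
Proof.
  rewrite Cmod_coords; intros H.
  assert (0 <= sqrt (x*x + y*y)) by apply sqrt_pos.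
  assert (sqrt (x*x + y*y) * sqrt (x*x + y*y) = x*x + y*y) by (apply sqrt_sqrt; nra).
  nra.
Qed.

Lemma Cmod_le_of_sqr (x y r : R) : 0 <= r -> x*x + y*y <= r*r -> Cmod (x, y) <= r.
Proof.
  intros Hr H; rewrite Cmod_coords, <- (sqrt_square r) by lra.
  apply sqrt_le_1_alt; lra.
Qed.

Lemma Cmod_lt_of_sqr (x y r : R) : 0 <= r -> x*x + y*y < r*r -> Cmod (x, y) < r.
Proof.
  intros Hr H; rewrite Cmod_coords, <- (sqrt_square r) by lra.
  apply sqrt_lt_1_alt; nra.
Qed.

(* With rho = x^2 + y^2 one has |s|^2 = rho^2 (rho + 6x + 9) / 9, and
   rho + 6x + 9 >= (sqrt rho - 3)^2 >= 4 as soon as rho >= 25. *)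
Lemma root_norm_lt_5 (a b x y : R) : P (a, b) (x, y) = 0%C ->
  a*a + b*b < (21/4)*(21/4) -> x*x + y*y < 25.
Proof.
  rewrite P_coords; intros H Hs; injection H; intros Hb Ha.
  set (rho := x*x + y*y).
  assert (Hid : a*a + b*b = rho*rho*(rho + 6*x + 9)/9).
  { replace a with (-(x^3/3 - x*y^2 + x^2 - y^2)) by lra.
    replace b with (-(x^2*y - y^3/3 + 2*x*y)) by lra.
    unfold rho; field. }
  destruct (Rlt_or_le rho 25) as [Hlt|Hge]; [exact Hlt|exfalso].
  assert (Hx : 6*x >= -(rho + 5)) by (unfold rho in *; nra).
  nra.
Qed.

Lemma root_sign (a b x y : R) : P (a, b) (x, y) = 0%C -> 0 < b ->
  (0 < y /\ x*x + 2*x < y*y/3) \/ (y < 0 /\ y*y/3 < x*x + 2*x).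
Proof.
  rewrite P_coords; intros H Hb; injection H as _ Him.
  assert (Hprod : y * (x*x + 2*x - y*y/3) < 0) by nra.
  destruct (Rtotal_order y 0) as [Hy|[Hy|Hy]]; [right|subst; lra|left]; split; nra.
Qed.

Lemma labelled_roots_are_roots s r1 r2 r3 : labelled_roots s r1 r2 r3 ->
  P s r1 = 0%C /\ P s r2 = 0%C /\ P s r3 = 0%C.
Proof. intros [H _]; rewrite !H; repeat split; ring. Qed.

(* Off the lower semicircle, the path is the graph of [chord] over [-6, 6]:
   the polygonal line from 6 to u0 has decreasing abscissa, and the segment
   [u0, -6] lies on the real axis. *)
Definition chord (x : R) : R :=
  Rmax (Rmin (Rmin (1/3) (Rmax 0 ((x + 4) / 3))) (- x - 2)) (Rmin x ((6 - x) / 17)).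

Lemma chord_cases x : -6 <= x <= 6 ->
  (x <= -4 /\ chord x = 0) \/
  (-4 <= x <= -3 /\ chord x = (x + 4) / 3) \/
  (-3 <= x <= -7/3 /\ chord x = 1/3) \/
  (-7/3 <= x <= -1 /\ chord x = - x - 2) \/
  (-1 <= x <= 1/3 /\ chord x = x) \/
  (1/3 <= x /\ chord x = (6 - x) / 17).
Proof.
  intros Hx.
  destruct (Rle_lt_dec x (-4)); [left|right].
  2: destruct (Rle_lt_dec x (-3)); [left|right].
  3: destruct (Rle_lt_dec x (-7/3)); [left|right].
  4: destruct (Rle_lt_dec x (-1)); [left|right].
  5: destruct (Rle_lt_dec x (1/3)); [left|right].
  all: split; [lra|]; unfold chord, Rmax, Rmin; repeat destruct Rle_dec; lra.
Qed.

Lemma lerp_coords (ax ay bx by' p : R) :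
  lerp (ax, ay) (bx, by') p = (ax + p*(bx - ax), ay + p*(by' - ay)).
Proof. unfold lerp, RtoC, Cmult, Cplus, Cminus, Copp; simpl; f_equal; ring. Qed.

Lemma cos_PI_1 : cos (PI * 1) = -1.
Proof. rewrite Rmult_1_r; apply cos_PI. Qed.
Lemma sin_PI_1 : sin (PI * 1) = 0.
Proof. rewrite Rmult_1_r; apply sin_PI. Qed.
Lemma cos_PI_2 : cos (PI * 2) = 1.
Proof. rewrite Rmult_comm; apply cos_2PI. Qed.
Lemma sin_PI_2 : sin (PI * 2) = 0.
Proof. rewrite Rmult_comm; apply sin_2PI. Qed.

Ltac gamma_piece :=
  intros [? ?]; unfold gamma, u0, v1, v2, v3, v4;
  repeat destruct Rle_dec; try lra; rewrite ?lerp_coords;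
  try match goal with H : ?a <= ?b, H' : ?b <= ?a |- _ =>
    let E := fresh in assert (E : a = b) by lra; subst end;
  rewrite ?cos_PI_1, ?sin_PI_1, ?cos_PI_2, ?sin_PI_2; f_equal; field.

Lemma gamma_seg0 t : 0 <= t <= 1 -> gamma t = (-4 - 2*t, 0).
Proof. gamma_piece. Qed.
Lemma gamma_arc t : 1 <= t <= 2 -> gamma t = (6 * cos (PI * t), 6 * sin (PI * t)).
Proof. gamma_piece. Qed.
Lemma gamma_seg2 t : 2 <= t <= 3 -> gamma t = (6 - 17/3*(t - 2), (t - 2)/3).
Proof. gamma_piece. Qed.
Lemma gamma_seg3 t : 3 <= t <= 4 -> gamma t = (1/3 - 4/3*(t - 3), 1/3 - 4/3*(t - 3)).
Proof. gamma_piece. Qed.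
Lemma gamma_seg4 t : 4 <= t <= 5 -> gamma t = (-1 - 4/3*(t - 4), -1 + 4/3*(t - 4)).
Proof. gamma_piece. Qed.
Lemma gamma_seg5 t : 5 <= t <= 6 -> gamma t = (-7/3 - 2/3*(t - 5), 1/3).
Proof. gamma_piece. Qed.
Lemma gamma_seg6 t : 6 <= t <= 7 -> gamma t = (-3 - (t - 6), 1/3 - (t - 6)/3).
Proof. gamma_piece. Qed.

Lemma lower_semicircle_on_path x y : x*x + y*y = 36 -> y <= 0 -> Cpath (x, y).
Proof.
  intros Hc Hy.
  assert (Hx : -1 <= x/6 <= 1) by (split; nra).
  set (a := acos (x/6)).
  assert (Ha : 0 <= a <= PI) by apply acos_bound.
  assert (HPI : 0 < PI) by apply PI_RGT_0.
  assert (Hq : 0 <= a/PI <= 1).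
  { split; [apply Rdiv_le_0_compat; lra|].
    apply Rmult_le_reg_r with PI; [lra|]; field_simplify; lra. }
  exists (2 - a/PI); split; [lra|].
  rewrite gamma_arc by lra.
  replace (PI * (2 - a/PI)) with (- a + PI * 2) by (field; lra).
  rewrite cos_plus, sin_plus, cos_neg, sin_neg, cos_PI_2, sin_PI_2.
  unfold a; rewrite cos_acos, sin_acos by lra.
  replace (1 - (x/6)²) with (Rsqr (- y/6)) by (unfold Rsqr; field_simplify; nra).
  rewrite sqrt_Rsqr by lra; f_equal; field.
Qed.

Lemma gamma_on_chord t : 0 <= t <= 1 \/ 2 <= t <= 7 ->
  -6 <= Re (gamma t) <= 6 /\ Im (gamma t) = chord (Re (gamma t)).
Proof.
  intros Ht.
  destruct (Rle_lt_dec t 1); [rewrite gamma_seg0 by lra|].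
  2: destruct (Rle_lt_dec t 3); [rewrite gamma_seg2 by lra|].
  3: destruct (Rle_lt_dec t 4); [rewrite gamma_seg3 by lra|].
  4: destruct (Rle_lt_dec t 5); [rewrite gamma_seg4 by lra|].
  5: destruct (Rle_lt_dec t 6); [rewrite gamma_seg5 by lra|rewrite gamma_seg6 by lra].
  all: simpl; split; [lra|unfold chord, Rmax, Rmin; repeat destruct Rle_dec; lra].
Qed.

Lemma gamma_on_lower_semicircle t : 1 <= t <= 2 ->
  Re (gamma t) * Re (gamma t) + Im (gamma t) * Im (gamma t) = 36 /\ Im (gamma t) <= 0.
Proof.
  intros Ht; rewrite gamma_arc by exact Ht; simpl; split.
  - assert (Hsc := sin2_cos2 (PI*t)); unfold Rsqr in Hsc; nra.
  - assert (0 < PI) by apply PI_RGT_0.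
    assert (sin (PI*t) <= 0) by (apply sin_le_0; nra); lra.
Qed.

Lemma Cpath_iff x y : Cpath (x, y) <->
  (x*x + y*y = 36 /\ y <= 0) \/ (-6 <= x <= 6 /\ y = chord x).
Proof.
  split.
  - intros [t [Ht E]].
    replace x with (Re (gamma t)) by (rewrite <- E; reflexivity).
    replace y with (Im (gamma t)) by (rewrite <- E; reflexivity).
    destruct (Rle_lt_dec 1 t) as [H1|H1]; [destruct (Rle_lt_dec t 2) as [H2|H2]|].
    + left; apply gamma_on_lower_semicircle; lra.
    + right; apply gamma_on_chord; lra.
    + right; apply gamma_on_chord; lra.
  - intros [[Hc Hy] | [Hx ->]]; [now apply lower_semicircle_on_path|].
    destruct (chord_cases x Hx) as [[Hr ->]|[[Hr ->]|[[Hr ->]|[[Hr ->]|[[Hr ->]|[Hr ->]]]]]].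
    + exists ((-4 - x)/2); split; [lra|]; rewrite gamma_seg0 by lra; f_equal; lra.
    + exists (3 - x); split; [lra|]; rewrite gamma_seg6 by lra; f_equal; lra.
    + exists (5 + (-7/3 - x)*3/2); split; [lra|]; rewrite gamma_seg5 by lra; f_equal; lra.
    + exists (4 + 3*(-1 - x)/4); split; [lra|]; rewrite gamma_seg4 by lra; f_equal; lra.
    + exists (3 + 3*(1/3 - x)/4); split; [lra|]; rewrite gamma_seg3 by lra; f_equal; lra.
    + exists (2 + 3*(6 - x)/17); split; [lra|]; rewrite gamma_seg2 by lra; f_equal; lra.
Qed.

Ltac destruct_chord x :=
  let Hx := fresh in
  match goal with H : -6 <= x <= 6 |- _ => pose proof (chord_cases x H) as Hx end;
  let E := fresh in
  destruct Hx as [[? E]|[[? E]|[[? E]|[[? E]|[[? E]|[? E]]]]]]; rewrite E in *; clear E.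

Lemma chord_lt_upper_circle x y : x*x + y*y = 36 -> 0 < y -> chord x < y.
Proof.
  intros Hc Hy; assert (-6 <= x <= 6) by (split; nra).
  destruct_chord x; nra.
Qed.

Lemma chord_pos x : 0 < x < 6 -> 0 < chord x.
Proof. intros Hx; assert (-6 <= x <= 6) by lra; destruct_chord x; lra. Qed.

Lemma chord_nonneg x : -6 <= x <= -2 -> 0 <= chord x.
Proof. intros Hx; assert (-6 <= x <= 6) by lra; destruct_chord x; lra. Qed.

Lemma chord_lt_upper_root x y : -6 <= x <= 6 -> 0 < y -> x*x + 2*x < y*y/3 -> chord x < y.
Proof. intros Hx Hy Hr; destruct_chord x; nra. Qed.

Lemma chord_in_disc x : -6 <= x <= 6 -> x*x + chord x * chord x <= 36.
Proof. intros Hx; destruct_chord x; nra. Qed.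

Lemma no_root_on_path s u : DDplus (21/4) s -> Cpath u -> P s u <> 0%C.
Proof.
  destruct s as [a b], u as [x y]; intros [Hb Hs] Hu HP; simpl in Hb.
  assert (Hnorm := root_norm_lt_5 a b x y HP (Cmod_lt_sqr a b _ Hs)).
  apply Cpath_iff in Hu; destruct Hu as [[Hc _]|[Hx ->]]; [lra|].
  destruct (root_sign a b x _ HP Hb) as [[Hy Hr]|[Hy Hr]]; destruct_chord x; nra.
Qed.

(** * Continuity *)

Lemma continuous_Re (z : C) : continuous Re z.
Proof. destruct z; apply continuous_fst. Qed.

Lemma continuous_Im (z : C) : continuous Im z.
Proof. destruct z; apply continuous_snd. Qed.

Lemma Rmax_abs (a b : R) : Rmax a b = (a + b + Rabs (a - b)) / 2.
Proof.
  unfold Rmax; destruct Rle_dec;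
    [rewrite Rabs_left1 by lra | rewrite Rabs_right by lra]; field.
Qed.

Lemma Rmin_abs (a b : R) : Rmin a b = (a + b - Rabs (a - b)) / 2.
Proof.
  unfold Rmin; destruct Rle_dec;
    [rewrite Rabs_left1 by lra | rewrite Rabs_right by lra]; field.
Qed.

Section Continuity.
Context {U : UniformSpace}.

Lemma continuous_Rplus (f g : U -> R) x :
  continuous f x -> continuous g x -> continuous (fun y => f y + g y) x.
Proof. apply (continuous_plus f g). Qed.

Lemma continuous_Rmult (f g : U -> R) x :
  continuous f x -> continuous g x -> continuous (fun y => f y * g y) x.
Proof. apply (continuous_mult f g). Qed.

Lemma continuous_Ropp (f : U -> R) x : continuous f x -> continuous (fun y => - f y) x.
Proof. apply (continuous_opp f). Qed.

Lemma continuous_Rminus (f g : U -> R) x :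
  continuous f x -> continuous g x -> continuous (fun y => f y - g y) x.
Proof. intros; apply continuous_Rplus; [|apply continuous_Ropp]; assumption. Qed.

Lemma continuous_Rpow (f : U -> R) (n : nat) x :
  continuous f x -> continuous (fun y => f y ^ n) x.
Proof.
  intros Hf; induction n as [|n IH]; simpl;
    [apply continuous_const | apply continuous_Rmult; assumption].
Qed.

Lemma continuous_Rabs_fun (f : U -> R) x : continuous f x -> continuous (fun y => Rabs (f y)) x.
Proof. intros Hf; apply (continuous_comp f Rabs); [assumption | apply continuous_Rabs]. Qed.

Lemma continuous_Rmax (f g : U -> R) x :
  continuous f x -> continuous g x -> continuous (fun y => Rmax (f y) (g y)) x.
Proof.
  intros Hf Hg; apply (continuous_ext (fun y => (f y + g y + Rabs (f y - g y)) / 2)).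
  { intros y; symmetry; apply Rmax_abs. }
  unfold Rdiv; apply continuous_Rmult; [|apply continuous_const].
  apply continuous_Rplus; [apply continuous_Rplus|apply continuous_Rabs_fun, continuous_Rminus];
    assumption.
Qed.

Lemma continuous_Rmin (f g : U -> R) x :
  continuous f x -> continuous g x -> continuous (fun y => Rmin (f y) (g y)) x.
Proof.
  intros Hf Hg; apply (continuous_ext (fun y => (f y + g y - Rabs (f y - g y)) / 2)).
  { intros y; symmetry; apply Rmin_abs. }
  unfold Rdiv; apply continuous_Rmult; [|apply continuous_const].
  apply continuous_Rminus; [apply continuous_Rplus|apply continuous_Rabs_fun, continuous_Rminus];
    assumption.
Qed.

Lemma continuous_C (f : U -> C) x :
  continuous (fun y => Re (f y)) x -> continuous (fun y => Im (f y)) x -> continuous f x.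
Proof.
  intros Hre Him P [eps HP].
  assert (H1 := Hre _ (locally_ball (Re (f x)) eps)).
  assert (H2 := Him _ (locally_ball (Im (f x)) eps)).
  unfold filtermap in *.
  generalize (filter_and _ _ H1 H2); apply filter_imp.
  intros y [B1 B2]; apply HP; split; assumption.
Qed.

Lemma continuous_Cplus (f g : U -> C) x :
  continuous f x -> continuous g x -> continuous (fun y => (f y + g y)%C) x.
Proof. apply (continuous_plus f g). Qed.

End Continuity.

Ltac continuous_tac :=
  let compose f Hf := apply (continuous_comp _ f); [continuous_tac|apply Hf] in
  match goal with
  | |- continuous (fun _ => ?c) _ => apply continuous_const
  | |- continuous (fun y => y) _ => apply continuous_id
  | |- continuous fst _ => apply continuous_Re
  | |- continuous Re _ => apply continuous_Re
  | |- continuous Im _ => apply continuous_Im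
  | |- continuous snd _ => apply continuous_Im
  | |- continuous Ropp _ => apply (continuous_Ropp (fun y => y)); continuous_tac
  | |- continuous (Rplus ?c) _ =>
      apply (continuous_Rplus (fun _ => c) (fun y => y)); continuous_tac
  | |- continuous (Rminus ?c) _ =>
      apply (continuous_Rminus (fun _ => c) (fun y => y)); continuous_tac
  | |- continuous (Rmult ?c) _ =>
      apply (continuous_Rmult (fun _ => c) (fun y => y)); continuous_tac
  | |- continuous (fun y => Re _) _ => compose Re continuous_Re
  | |- continuous (fun y => Im _) _ => compose Im continuous_Im
  | |- continuous (fun y => fst _) _ => compose Re continuous_Re
  | |- continuous (fun y => snd _) _ => compose Im continuous_Im
  | |- continuous (fun y => _ + _) _ => apply continuous_Rplus; continuous_tac
  | |- continuous (fun y => _ - _) _ => apply continuous_Rminus; continuous_tac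
  | |- continuous (fun y => _ * _) _ => apply continuous_Rmult; continuous_tac
  | |- continuous (fun y => - _) _ => apply continuous_Ropp; continuous_tac
  | |- continuous (fun y => _ / _) _ => unfold Rdiv; continuous_tac
  | |- continuous (fun y => _ ^ _) _ => apply continuous_Rpow; continuous_tac
  | |- continuous (fun y => Rmax _ _) _ => apply continuous_Rmax; continuous_tac
  | |- continuous (fun y => Rmin _ _) _ => apply continuous_Rmin; continuous_tac
  | |- continuous (fun y => / _) _ => compose Rinv continuous_Rinv
  | |- continuous (fun y => sqrt _) _ => compose sqrt continuous_sqrt
  | |- continuous (fun y => cos _) _ => compose cos continuous_cos
  | |- continuous (fun y => sin _) _ => compose sin continuous_sin
  | |- continuous (fun y => (_ + _)%C) _ => apply continuous_Cplus; continuous_tac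
  | |- continuous (fun y => (_, _)) _ => apply continuous_C; simpl; continuous_tac
  | |- continuous (fun y => (_ * _)%C) _ => unfold Cmult; continuous_tac
  | |- continuous (fun y => RtoC _) _ => unfold RtoC; continuous_tac
  | |- continuous (fun y => (_ - _)%C) _ => unfold Cminus, Copp; continuous_tac
  | |- continuous (fun y => (- _)%C) _ => unfold Copp; continuous_tac
  | |- continuous (fun y => (_ / _)%C) _ => unfold Cdiv; continuous_tac
  | |- _ => try assumption
  end.

Lemma continuous_P (s z : C) : continuous (P s) z.
Proof. unfold P; continuous_tac. Qed.

Lemma continuous_chord (x : R) : continuous chord x.
Proof. unfold chord; continuous_tac. Qed.

(** * Inside and outside *)

Lemma inside_of_separation (Gamma U V : C -> Prop) (M : R) (z : C) :
  open U -> open V -> (forall w, U w -> V w -> False) ->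
  (forall w, ~ Gamma w -> U w \/ V w) -> (forall w, U w -> ~ Gamma w) ->
  (forall w, U w -> Cmod w <= M) -> U z -> inside Gamma z.
Proof.
  intros HU HV Hdisj Hcover HUG HM Hz; split; [now apply HUG|].
  exists M; intros K HK Kz KG w Kw.
  destruct (Hcover w (KG w Kw)) as [Uw|Vw]; [now apply HM|exfalso].
  destruct (HK U V HU HV) as [y [_ [Uy Vy]]].
  - intros y Ky; apply Hcover, KG, Ky.
  - exists z; split; [exact Kz|exact Hz].
  - exists w; split; [exact Kw|exact Vw].
  - exact (Hdisj y Uy Vy).
Qed.

Lemma interval_connected (A B : R -> Prop) (a b : R) : a <= b -> open A -> open B ->
  (forall t, a <= t <= b -> A t \/ B t) -> A a -> B b ->
  exists t, a <= t <= b /\ A t /\ B t.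
Proof.
  intros Hab HA HB Hcover Aa Bb.
  set (E := fun t => a <= t <= b /\ forall s, a <= s <= t -> A s).
  assert (Ea : E a) by (split; [lra|]; intros s Hs; replace s with a by lra; exact Aa).
  assert (HEb : bound E) by (exists b; intros t [Ht _]; lra).
  destruct (completeness E HEb (ex_intro _ a Ea)) as [c [Hub Hlub]].
  assert (Hac : a <= c) by (apply Hub, Ea).
  assert (Hcb : c <= b) by (apply Hlub; intros t [Ht _]; lra).
  assert (Hbelow : forall s, a <= s < c -> A s).
  { intros s Hs; apply NNPP; intros HAs.
    assert (c <= s); [|lra].
    apply Hlub; intros t [Ht Hall]; apply Rnot_lt_le; intros Hst.
    apply HAs, Hall; lra. }
  destruct (Hcover c (conj Hac Hcb)) as [Ac|Bc].
  - destruct (Req_dec c b) as [<-|Hne]; [exists c; auto|exfalso].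
    destruct (HA c Ac) as [eps Heps]; assert (Heps0 := cond_pos eps).
    set (t := Rmin (c + eps/2) b).
    assert (Et : E t).
    { split; [unfold t; split; [apply Rmin_case; lra|apply Rmin_r]|].
      intros s Hs; destruct (Rlt_le_dec s c); [apply Hbelow; lra|].
      apply Heps; change (Rabs (s - c) < eps).
      assert (s <= c + eps/2) by (eapply Rle_trans; [apply Hs|apply Rmin_l]).
      rewrite Rabs_right; lra. }
    assert (Htc : t <= c) by (apply Hub, Et).
    revert Htc; unfold t; apply Rmin_case; lra.
  - destruct (Req_dec c a) as [<-|Hne]; [exists c; auto|].
    destruct (HB c Bc) as [eps Heps]; assert (Heps0 := cond_pos eps).
    set (t := Rmax (c - eps/2) a).
    assert (Ht : a <= t < c /\ c - eps/2 <= t)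
      by (unfold t; split; [split; [apply Rmax_r|apply Rmax_case; lra]|apply Rmax_l]).
    exists t; split; [lra|split; [apply Hbelow; lra|]].
    apply Heps; change (Rabs (t - c) < eps); rewrite Rabs_left; lra.
Qed.

Lemma segment_coords (px py qx qy x y : R) : segment (px, py) (qx, qy) (x, y) <->
  exists t, 0 <= t <= 1 /\ x = px + t*(qx - px) /\ y = py + t*(qy - py).
Proof.
  unfold segment; split; intros [t [Ht E]]; exists t; split; auto.
  - unfold RtoC, Cmult, Cplus, Cminus, Copp in E; simpl in E.
    injection E as -> ->; split; ring.
  - destruct E as [-> ->]; unfold RtoC, Cmult, Cplus, Cminus, Copp; simpl; f_equal; ring.
Qed.

Lemma segment_connected (p q : C) : connected_set (segment p q).
Proof.
  set (f := fun t : R => (p + RtoC t * (q - p))%C).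
  assert (Hopen : forall W : C -> Prop, open W -> open (fun t => W (f t))).
  { intros W HW; apply open_comp; [|exact HW].
    intros t _; change (continuous f t); unfold f; continuous_tac. }
  intros U V HU HV Hcover [z1 [[t1 [Ht1 ->]] Uz1]] [z2 [[t2 [Ht2 ->]] Vz2]].
  assert (Hseg : forall t, 0 <= t <= 1 -> segment p q (f t)) by (intros t Ht; exists t; auto).
  destruct (Rle_lt_dec t1 t2).
  - destruct (interval_connected (fun t => U (f t)) (fun t => V (f t)) t1 t2)
      as [t [Ht [Ut Vt]]]; auto.
    + intros t Ht; apply Hcover, Hseg; lra.
    + exists (f t); split; [apply Hseg; lra|auto].
  - destruct (interval_connected (fun t => V (f t)) (fun t => U (f t)) t2 t1)
      as [t [Ht [Vt Ut]]]; auto; try lra.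
    + intros t Ht; destruct (Hcover (f t)); auto; apply Hseg; lra.
    + exists (f t); split; [apply Hseg; lra|auto].
Qed.

Lemma outside_of_ray (Gamma : C -> Prop) (x y dx dy : R) : (dx, dy) <> (0, 0) ->
  (forall t, 0 <= t -> ~ Gamma (x + t*dx, y + t*dy)) -> outside Gamma (x, y).
Proof.
  intros Hd Hray.
  assert (Hpt : forall t, (x + t*dx, y + t*dy) = ((x, y) + RtoC t * (dx, dy))%C)
    by (intros t; unfold RtoC, Cmult, Cplus; simpl; f_equal; ring).
  split; [replace (x, y) with (x + 0*dx, y + 0*dy) by (f_equal; ring); apply Hray; lra|].
  intros M.
  assert (Hdpos : 0 < Cmod (dx, dy)) by (apply Cmod_gt_0; exact Hd).
  set (T := (Rabs M + Cmod (x, y) + 1) / Cmod (dx, dy)).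
  assert (HT : T * Cmod (dx, dy) = Rabs M + Cmod (x, y) + 1) by (unfold T; field; lra).
  assert (T0 : 0 <= T)
    by (unfold T; apply Rdiv_le_0_compat; [generalize (Rabs_pos M) (Cmod_ge_0 (x, y))|]; lra).
  exists (segment (x, y) (x + T*dx, y + T*dy)); repeat split.
  - apply segment_connected.
  - exists 0; split; [lra|]; unfold RtoC, Cmult, Cplus, Cminus, Copp; simpl; f_equal; ring.
  - intros w [t [Ht ->]].
    match goal with |- ~ Gamma ?w =>
      replace w with (x + (t*T)*dx, y + (t*T)*dy)
        by (unfold RtoC, Cmult, Cplus, Cminus, Copp; simpl; f_equal; ring) end.
    apply Hray; apply Rmult_le_pos; lra.
  - exists (x + T*dx, y + T*dy); split.
    + exists 1; split; [lra|]; unfold RtoC, Cmult, Cplus, Cminus, Copp; simpl; f_equal; ring.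
    + rewrite Hpt.
      assert (Htri := Cmod_triangle ((x, y) + RtoC T * (dx, dy)) (- (x, y))).
      replace ((x, y) + RtoC T * (dx, dy) + - (x, y))%C with (RtoC T * (dx, dy))%C in Htri
        by ring.
      rewrite Cmod_mult, Cmod_R, Rabs_right, Cmod_opp in Htri by lra.
      generalize (Rle_abs M); lra.
Qed.

(** * Location of the roots *)

Definition C0hat_interior (z : C) : Prop :=
  (-6 < Re z < 6 /\ -6 < Im z < 6) /\ (-1 < Re z \/ 0 < Im z).

Definition C0hat_exterior (z : C) : Prop :=
  Re z < -6 \/ 6 < Re z \/ Im z < -6 \/ 6 < Im z \/ (Re z < -1 /\ Im z < 0).

Definition Cpath_interior (z : C) : Prop :=
  Re z * Re z + Im z * Im z < 36 /\ Im z < chord (Re z).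

Definition Cpath_exterior (z : C) : Prop :=
  36 < Re z * Re z + Im z * Im z \/ (-6 < Re z < 6 /\ chord (Re z) < Im z).

Lemma open_lt_fun (F G : C -> R) : (forall z, continuous F z) -> (forall z, continuous G z) ->
  open (fun z => F z < G z).
Proof.
  intros HF HG.
  apply (open_ext (fun z => 0 < G z - F z)); [intros z; split; intros; lra|].
  apply (open_comp (fun z => G z - F z) (fun u => 0 < u)); [|apply open_gt].
  intros z _; apply continuous_Rminus; auto.
Qed.

Ltac open_lts :=
  repeat match goal with
  | |- open (fun z => _ /\ _) => apply open_and
  | |- open (fun z => _ \/ _) => apply open_or
  | |- open (fun z => _ < _) =>
      apply open_lt_fun; intros; continuous_tac;
      try (apply (continuous_comp _ chord); [continuous_tac|apply continuous_chord])
  end.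

Lemma C0hat_interior_open : open C0hat_interior.
Proof. unfold C0hat_interior; open_lts. Qed.

Lemma C0hat_exterior_open : open C0hat_exterior.
Proof. unfold C0hat_exterior; open_lts. Qed.

Lemma Cpath_interior_open : open Cpath_interior.
Proof. unfold Cpath_interior; open_lts. Qed.

Lemma Cpath_exterior_open : open Cpath_exterior.
Proof. unfold Cpath_exterior; open_lts. Qed.

Lemma C0hat_not_interior w : C0hat w -> ~ C0hat_interior w.
Proof.
  destruct w as [x y]; unfold C0hat, C0hat_interior, Re, Im; simpl.
  rewrite !segment_coords; intros H; decompose [or ex and] H; lra.
Qed.

Lemma C0hat_interior_exterior_disjoint w : C0hat_interior w -> C0hat_exterior w -> False.
Proof. unfold C0hat_interior, C0hat_exterior; lra. Qed.

Lemma C0hat_interior_exterior_cover w : ~ C0hat w -> C0hat_interior w \/ C0hat_exterior w.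
Proof.
  destruct w as [x y]; unfold C0hat, C0hat_interior, C0hat_exterior, Re, Im; simpl.
  rewrite !segment_coords; intros Hw.
  destruct (classic ((-6 < x < 6 /\ -6 < y < 6) /\ (-1 < x \/ 0 < y))) as [?|Hin]; [left; auto|].
  destruct (classic (x < -6 \/ 6 < x \/ y < -6 \/ 6 < y \/ (x < -1 /\ y < 0))) as [?|Hout];
    [right; auto|exfalso; apply Hw].
  destruct (Req_dec x 6); [do 2 right; left; exists ((y + 6)/12); repeat split; lra|].
  destruct (Req_dec x (-6)); [do 4 right; left; exists ((6 - y)/6); repeat split; lra|].
  destruct (Req_dec y 6); [do 3 right; left; exists ((6 - x)/12); repeat split; lra|].
  destruct (Req_dec y (-6)); [right; left; exists ((x + 1)/7); repeat split; lra|].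
  destruct (Req_dec x (-1)); [left; exists (- y/6); repeat split; lra|].
  do 5 right; exists ((x + 6)/5); repeat split; lra.
Qed.

Lemma C0hat_interior_bounded w : C0hat_interior w -> Cmod w <= 9.
Proof.
  destruct w as [x y]; unfold C0hat_interior, Re, Im; simpl; intros H.
  apply Cmod_le_of_sqr; nra.
Qed.

Lemma Cpath_not_interior w : Cpath w -> ~ Cpath_interior w.
Proof.
  destruct w as [x y]; unfold Cpath_interior, Re, Im; simpl.
  rewrite Cpath_iff; lra.
Qed.

Lemma Cpath_interior_exterior_disjoint w : Cpath_interior w -> Cpath_exterior w -> False.
Proof. unfold Cpath_interior, Cpath_exterior; lra. Qed.

Lemma Cpath_interior_exterior_cover w : ~ Cpath w -> Cpath_interior w \/ Cpath_exterior w.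
Proof.
  destruct w as [x y]; unfold Cpath_interior, Cpath_exterior, Re, Im; simpl.
  rewrite Cpath_iff; intros Hw.
  destruct (Rtotal_order (x*x + y*y) 36) as [Hlt|[Heq|Hgt]]; [|  |right; left; exact Hgt].
  - assert (Hx : -6 < x < 6) by (split; nra).
    destruct (Rtotal_order y (chord x)) as [H|[H|H]];
      [left; auto|exfalso; apply Hw; right; split; [lra|auto]|right; right; auto].
  - destruct (Rle_lt_dec y 0) as [Hy|Hy]; [exfalso; apply Hw; left; auto|].
    right; right; split; [split; nra|apply chord_lt_upper_circle; auto].
Qed.

Lemma Cpath_interior_bounded w : Cpath_interior w -> Cmod w <= 6.
Proof.
  destruct w as [x y]; unfold Cpath_interior, Re, Im; simpl; intros H.
  apply Cmod_le_of_sqr; lra.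
Qed.

Lemma root_in_disc_5 s r : DDplus (21/4) s -> P s r = 0%C ->
  Re r * Re r + Im r * Im r < 25.
Proof.
  destruct s as [a b], r as [x y]; intros [_ Hs] H.
  exact (root_norm_lt_5 a b x y H (Cmod_lt_sqr a b _ Hs)).
Qed.

Lemma labelled_roots_in_half_discs s r1 r2 r3 :
  DDplus (21/4) s -> labelled_roots s r1 r2 r3 ->
  DDminus 5 r3 /\ DDminus 5 r1 /\ DDplus 5 r2.
Proof.
  intros Hs HL; destruct (labelled_roots_are_roots _ _ _ _ HL) as [Z1 [Z2 Z3]].
  assert (B1 := root_in_disc_5 _ _ Hs Z1); assert (B2 := root_in_disc_5 _ _ Hs Z2);
    assert (B3 := root_in_disc_5 _ _ Hs Z3).
  destruct HL as [_ [_ [_ [_ [I2 [I1 [_ [I3 _]]]]]]]].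
  destruct r1 as [x1 y1], r2 as [x2 y2], r3 as [x3 y3]; unfold DDminus, DDplus.
  repeat split; try assumption; apply Cmod_lt_of_sqr; simpl in *; lra.
Qed.

Lemma labelled_roots_vs_C0hat s r1 r2 r3 :
  DDplus (21/4) s -> labelled_roots s r1 r2 r3 ->
  inside C0hat r2 /\ inside C0hat r3 /\ outside C0hat r1.
Proof.
  intros Hs HL; destruct (labelled_roots_are_roots _ _ _ _ HL) as [Z1 [Z2 Z3]].
  assert (B1 := root_in_disc_5 _ _ Hs Z1); assert (B2 := root_in_disc_5 _ _ Hs Z2);
    assert (B3 := root_in_disc_5 _ _ Hs Z3).
  destruct HL as [_ [_ [_ [_ [I2 [I1 [R1 [I3 R3]]]]]]]].
  assert (Hin : forall r, Re r * Re r + Im r * Im r < 25 -> -1 < Re r \/ 0 < Im r ->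
            inside C0hat r).
  { intros r Hr Hq.
    apply (inside_of_separation C0hat C0hat_interior C0hat_exterior 9 r C0hat_interior_open
      C0hat_exterior_open C0hat_interior_exterior_disjoint C0hat_interior_exterior_cover);
      [intros w Hw HC; exact (C0hat_not_interior w HC Hw)|exact C0hat_interior_bounded|].
    split; [split; split; nra|exact Hq]. }
  split; [apply Hin; auto|split; [apply Hin; auto; lra|]].
  destruct r1 as [x1 y1]; simpl in *.
  apply (outside_of_ray _ x1 y1 (-1) 0); [intros E; injection E; lra|].
  intros t Ht HC; unfold C0hat in HC; rewrite !segment_coords in HC.
  assert (-5 < y1) by nra.
  decompose [or ex and] HC; lra.
Qed.

Lemma labelled_roots_vs_Cpath s r1 r2 r3 :
  DDplus (21/4) s -> labelled_roots s r1 r2 r3 ->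
  inside Cpath r1 /\ inside Cpath r3 /\ outside Cpath r2.
Proof.
  intros Hs HL; destruct (labelled_roots_are_roots _ _ _ _ HL) as [Z1 [Z2 Z3]].
  assert (B1 := root_in_disc_5 _ _ Hs Z1); assert (B2 := root_in_disc_5 _ _ Hs Z2);
    assert (B3 := root_in_disc_5 _ _ Hs Z3).
  destruct HL as [_ [_ [_ [_ [I2 [I1 [R1 [I3 R3]]]]]]]].
  assert (Hin : forall r, Re r * Re r + Im r * Im r < 25 -> Im r < chord (Re r) ->
            inside Cpath r).
  { intros r Hr Hq.
    apply (inside_of_separation Cpath Cpath_interior Cpath_exterior 6 r Cpath_interior_open
      Cpath_exterior_open Cpath_interior_exterior_disjoint Cpath_interior_exterior_cover);
      [intros w Hw HC; exact (Cpath_not_interior w HC Hw)|exact Cpath_interior_bounded|].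
    split; [lra|exact Hq]. }
  split; [|split].
  - apply Hin; auto.
    assert (0 <= chord (Re r1)) by (apply chord_nonneg; split; nra); lra.
  - apply Hin; auto.
    assert (0 < chord (Re r3)) by (apply chord_pos; split; nra); lra.
  - destruct s as [a b], r2 as [x2 y2]; destruct Hs as [Hb _]; simpl in *.
    destruct (root_sign a b x2 y2 Z2 Hb) as [[_ Hr]|[Hy _]]; [|lra].
    apply (outside_of_ray _ x2 y2 0 1); [intros E; injection E; lra|].
    intros t Ht HC; replace (x2 + t*0) with x2 in HC by ring; apply Cpath_iff in HC.
    destruct HC as [[_ Hy]|[Hx Hc]]; [nra|].
    assert (chord x2 < y2) by (apply chord_lt_upper_root; [lra|lra|exact Hr]); nra.
Qed.

(** * Continuous square roots *)

Definition in_slit_plane (z : C) : Prop := 0 < Cmod z + Re z.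

(* The principal square root; it is only meaningful on [in_slit_plane]. *)
Definition Csqrt (z : C) : C :=
  (sqrt ((Cmod z + Re z) / 2), Im z / (2 * sqrt ((Cmod z + Re z) / 2))).

Lemma Cmod_sqr (z : C) : Cmod z * Cmod z = Re z * Re z + Im z * Im z.
Proof. destruct z as [x y]; rewrite Cmod_coords; apply sqrt_sqrt; nra. Qed.

Lemma in_slit_plane_of_Re_pos z : 0 < Re z -> in_slit_plane z.
Proof. unfold in_slit_plane; generalize (Cmod_ge_0 z); lra. Qed.

Lemma Csqrt_sqr z : in_slit_plane z -> (Csqrt z * Csqrt z)%C = z.
Proof.
  unfold in_slit_plane, Csqrt; intros Hz.
  assert (Hm := Cmod_sqr z).
  set (m := Cmod z) in *; destruct z as [x y]; simpl in *.
  assert (Hpos : 0 < (m + x) / 2) by lra.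
  assert (Ha := sqrt_sqrt _ (Rlt_le _ _ Hpos)).
  assert (Ha0 := sqrt_lt_R0 _ Hpos).
  set (a := sqrt ((m + x) / 2)) in *.
  unfold Cmult; simpl; f_equal.
  - replace (a * a - y / (2 * a) * (y / (2 * a))) with (a * a - y * y / (4 * (a * a)))
      by (field; lra).
    rewrite Ha; field_simplify; [|lra].
    replace (m ^ 2) with (m * m) by ring; rewrite Hm; field; lra.
  - field; lra.
Qed.

Lemma continuous_Csqrt z : in_slit_plane z -> continuous Csqrt z.
Proof.
  unfold in_slit_plane, Csqrt; intros Hz.
  assert (0 < sqrt ((Cmod z + Re z) / 2)) by (apply sqrt_lt_R0; lra).
  unfold Cmod; continuous_tac; change (2 * sqrt ((Cmod z + Re z) / 2) <> 0); lra.
Qed.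

Lemma Csqr_surj z : exists c, (c * c)%C = z.
Proof.
  destruct (Rlt_le_dec 0 (Cmod z + Re z)) as [Hz|Hz]; [exists (Csqrt z); now apply Csqrt_sqr|].
  assert (Hm := Cmod_sqr z); assert (Hre := re_le_Cmod z).
  destruct z as [x y]; simpl in *.
  assert (Hx : Cmod (x, y) = - x) by (generalize (Rabs_maj2 x); lra).
  assert (Hy : y = 0) by nra; subst y.
  exists (0, sqrt (- x)); unfold Cmult; simpl; f_equal; [|ring].
  rewrite sqrt_sqrt by (generalize (Cmod_ge_0 (x, 0)); lra); ring.
Qed.

Lemma Csqr_eq_cases (u v : C) : (u * u)%C = (v * v)%C -> u = v \/ u = (- v)%C.
Proof.
  intros H; destruct (classic (u = v)) as [|Hne]; [now left|right].
  apply NNPP; intros Hne'.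
  apply (Cmult_neq_0 (u - v) (u + v)).
  - intros E; apply Hne; replace u with (u - v + v)%C by ring; rewrite E; ring.
  - intros E; apply Hne'; replace u with (u + v - v)%C by ring; rewrite E; ring.
  - replace ((u - v) * (u + v))%C with (u * u - v * v)%C by ring; rewrite H; ring.
Qed.

Definition Icc (a b t : R) : Prop := a <= t <= b.

Definition cont_on (D : R -> Prop) (f : R -> C) : Prop :=
  forall t, D t -> filterlim f (within D (locally t)) (locally (f t)).

Lemma filterlim_within_subset (D E : R -> Prop) (f : R -> C) (t : R) (l : C) :
  (forall x, E x -> D x) ->
  filterlim f (within D (locally t)) (locally l) ->
  filterlim f (within E (locally t)) (locally l).
Proof.
  intros HED Hf P HP; generalize (Hf P HP); unfold filtermap, within.
  apply filter_imp; intros x HD HE; exact (HD (HED x HE)).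
Qed.

Lemma cont_on_of_continuous (D : R -> Prop) (f : R -> C) :
  (forall t, D t -> continuous f t) -> cont_on D f.
Proof.
  intros Hf t Dt; exact (filterlim_filter_le_1 f (@filter_le_within R (locally t) _ D) (Hf t Dt)).
Qed.

Lemma cont_on_comp (D : R -> Prop) (f : R -> C) (h : C -> C) :
  cont_on D f -> (forall t, D t -> continuous h (f t)) -> cont_on D (fun t => h (f t)).
Proof. intros Hf Hh t Dt; exact (filterlim_comp _ _ _ f h _ _ _ (Hf t Dt) (Hh t Dt)). Qed.

Lemma cont_on_glue (a c b : R) (f g : R -> C) : a <= c <= b ->
  cont_on (Icc a c) f -> cont_on (Icc c b) g -> f c = g c ->
  cont_on (Icc a b) (fun t => if Rle_dec t c then f t else g t).
Proof.
  intros Hc Hf Hg Efg t Ht P HP; unfold Icc in *.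
  assert (Hleft : locally t (fun s => Icc a c s -> P (f s))).
  { destruct (Rle_dec t c) as [Htc|Htc].
    - exact (Hf t (conj (proj1 Ht) Htc) P HP).
    - apply (filter_imp (fun s => c < s)); [intros s Hs [_ Hsc]; lra|].
      apply open_gt; lra. }
  assert (Hright : locally t (fun s => Icc c b s -> P (g s))).
  { destruct (Rle_dec t c) as [Htc|Htc]; [destruct (Req_dec t c) as [->|Hne]|].
    - rewrite Efg in HP; exact (Hg c (conj (Rle_refl c) (proj2 Hc)) P HP).
    - apply (filter_imp (fun s => s < c)); [intros s Hs [Hcs _]; lra|].
      apply open_lt; lra.
    - exact (Hg t (conj (Rlt_le _ _ (Rnot_le_lt _ _ Htc)) (proj2 Ht)) P HP). }
  change (locally t (fun s => a <= s <= b -> P (if Rle_dec s c then f s else g s))).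
  generalize (filter_and _ _ Hleft Hright); apply filter_imp.
  intros s [Hl Hr] Hs; destruct (Rle_dec s c);
    [apply Hl|apply Hr]; unfold Icc; lra.
Qed.

Lemma cont_on_glue_sqrt (f g h : R -> C) (a c b : R) : a <= c <= b ->
  cont_on (Icc a c) g -> (forall t, a <= t <= c -> (g t * g t)%C = f t) ->
  cont_on (Icc c b) h -> (forall t, c <= t <= b -> (h t * h t)%C = f t) ->
  exists k, cont_on (Icc a b) k /\ forall t, a <= t <= b -> (k t * k t)%C = f t.
Proof.
  intros Hc Hg Sg Hh Sh.
  assert (Hh' : exists h', cont_on (Icc c b) h' /\
             (forall t, c <= t <= b -> (h' t * h' t)%C = f t) /\ h' c = g c).
  { destruct (Csqr_eq_cases (g c) (h c)) as [E|E]; [rewrite Sg, Sh; auto; lra| |].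
    - exists h; auto.
    - exists (fun t => (- h t)%C); repeat split.
      + apply (cont_on_comp _ h (fun z => (- z)%C) Hh); intros; continuous_tac.
      + intros t Ht; rewrite <- Sh by exact Ht; ring.
      + rewrite E; ring. }
  destruct Hh' as [h' [Hh' [Sh' E]]].
  exists (fun t => if Rle_dec t c then g t else h' t); split.
  - apply cont_on_glue; auto.
  - intros t Ht; destruct Rle_dec; [apply Sg|apply Sh']; lra.
Qed.

Lemma locally_Re_div_pos (z0 : C) : z0 <> 0%C -> locally z0 (fun z => 0 < Re (z / z0)).
Proof.
  intros Hz.
  assert (Hc : continuous (fun z => Re (z / z0)) z0) by continuous_tac.
  replace 0 with (Re (z0 / z0) - 1) by (unfold Cdiv; rewrite Cinv_r by exact Hz; simpl; ring).
  apply (Hc (fun r => Re (z0 / z0) - 1 < r)); apply open_gt; lra.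
Qed.

(* c * Csqrt (f t / f t0), with c^2 = f t0, works as long as f t / f t0 stays
   in the right half plane. *)
Lemma local_sqrt (D : R -> Prop) (f : R -> C) (t0 : R) :
  cont_on D f -> D t0 -> f t0 <> 0%C ->
  exists (delta : posreal) (L : R -> C), forall t, D t -> Rabs (t - t0) < delta ->
    (L t * L t)%C = f t /\ filterlim L (within D (locally t)) (locally (L t)).
Proof.
  intros Hf Dt0 Hnz.
  destruct (Hf t0 Dt0 _ (locally_Re_div_pos _ Hnz)) as [delta Hdelta].
  destruct (Csqr_surj (f t0)) as [c Hc].
  exists delta, (fun t => (c * Csqrt (f t / f t0))%C); intros t Dt Ht.
  assert (Hslit : in_slit_plane (f t / f t0))
    by (apply in_slit_plane_of_Re_pos, Hdelta; [exact Ht|exact Dt]).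
  split.
  - transitivity (c * c * (Csqrt (f t / f t0) * Csqrt (f t / f t0)))%C; [ring|].
    rewrite Hc, Csqrt_sqr by exact Hslit; field; exact Hnz.
  - apply (filterlim_comp _ _ _ f (fun z => (c * Csqrt (z / f t0))%C) _ _ _ (Hf t Dt)).
    apply (continuous_comp (fun z => (z / f t0)%C) (fun q => (c * Csqrt q)%C));
      [continuous_tac|].
    apply (continuous_comp Csqrt (fun q => (c * q)%C));
      [now apply continuous_Csqrt|continuous_tac].
Qed.

Lemma sqrt_lift (f : R -> C) (a b : R) : a <= b -> cont_on (Icc a b) f ->
  (forall t, a <= t <= b -> f t <> 0%C) ->
  exists g, cont_on (Icc a b) g /\ forall t, a <= t <= b -> (g t * g t)%C = f t.
Proof.
  intros Hab Hf Hnz.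
  set (S := fun c => a <= c <= b /\ exists g, cont_on (Icc a c) g /\
                      forall t, a <= t <= c -> (g t * g t)%C = f t).
  assert (Sa : S a).
  { split; [lra|]; destruct (Csqr_surj (f a)) as [c Hc].
    exists (fun _ => c); split; [apply cont_on_of_continuous; intros; continuous_tac|].
    intros t Ht; replace t with a by lra; exact Hc. }
  assert (HSb : bound S) by (exists b; intros c [Hc _]; lra).
  destruct (completeness S HSb (ex_intro _ a Sa)) as [cs [Hub Hlub]].
  assert (Hcs : a <= cs <= b) by (split; [apply Hub, Sa|apply Hlub; intros c [Hc _]; lra]).
  destruct (local_sqrt (Icc a b) f cs Hf Hcs (Hnz cs Hcs)) as [delta [L HL]].
  assert (Hd0 := cond_pos delta).
  destruct (classic (exists c1, S c1 /\ cs - delta/2 < c1)) as [[c1 [Sc1 Hc1]]|Hno].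
  2:{ exfalso; assert (cs <= cs - delta/2); [|lra].
      apply Hlub; intros c Sc; apply Rnot_lt_le; intros Hlt; apply Hno; exists c; auto. }
  assert (Hc1cs : c1 <= cs) by (apply Hub, Sc1).
  destruct Sc1 as [Hc1ab [g [Hg Sg]]].
  set (e := Rmin (cs + delta/2) b).
  assert (He : c1 <= e <= b /\ e <= cs + delta/2)
    by (unfold e; repeat split; [apply Rmin_case|apply Rmin_r|apply Rmin_l]; lra).
  assert (Hnear : forall t, c1 <= t <= e -> Icc a b t /\ Rabs (t - cs) < delta)
    by (intros t Ht; split; [unfold Icc; lra|apply Rabs_def1; lra]).
  (* Gluing the root on [a, c1] to L would go beyond cs, unless b is reached. *)
  destruct (cont_on_glue_sqrt f g L a c1 e) as [k [Hk Sk]]; auto; try lra.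
  - intros t Ht; destruct (Hnear t Ht) as [Dt Bt].
    apply (filterlim_within_subset (Icc a b)); [intros x Hx; unfold Icc in *; lra|].
    exact (proj2 (HL t Dt Bt)).
  - intros t Ht; destruct (Hnear t Ht) as [Dt Bt]; exact (proj1 (HL t Dt Bt)).
  - assert (Se : S e) by (split; [lra|exists k; auto]).
    assert (Heb : e = b).
    { assert (Hecs : e <= cs) by (apply Hub, Se).
      revert Hecs; unfold e; apply Rmin_case_strong; lra. }
    rewrite Heb in Hk, Sk; exists k; auto.
Qed.

Lemma cont_on_gamma : cont_on (Icc 0 7) gamma.
Proof.
  unfold gamma.
  repeat (apply cont_on_glue;
    [lra
    | apply cont_on_of_continuous; intros; unfold lerp; continuous_tac
    |
    | repeat destruct Rle_dec; try lra; unfold u0, v1, v2, v3, v4; rewrite ?lerp_coords;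
      rewrite ?cos_PI_1, ?sin_PI_1, ?cos_PI_2, ?sin_PI_2; f_equal; field]).
  apply cont_on_of_continuous; intros; unfold lerp; continuous_tac.
Qed.

Lemma branch_exists s : DDplus (21/4) s -> exists w, branch s w.
Proof.
  intros Hs.
  destruct (sqrt_lift (fun t => P s (gamma t)) 0 7) as [w [Hw Sw]].
  - lra.
  - apply (cont_on_comp _ gamma (P s) cont_on_gamma); intros; apply continuous_P.
  - intros t Ht; apply no_root_on_path; [exact Hs|exists t; auto].
  - exists w; split; [exact Hw|exact Sw].
Qed.

(** * The bound on J *)

Definition clamp (a b t : R) : R := Rmax a (Rmin b t).

Lemma clamp_in a b t : a <= b -> a <= clamp a b t <= b.
Proof. intros; unfold clamp, Rmax, Rmin; repeat destruct Rle_dec; lra. Qed.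

Lemma clamp_id a b t : a <= t <= b -> clamp a b t = t.
Proof. intros; unfold clamp, Rmax, Rmin; repeat destruct Rle_dec; lra. Qed.

Lemma clamp_lipschitz a b s t : Rabs (clamp a b s - clamp a b t) <= Rabs (s - t).
Proof.
  unfold clamp, Rmax, Rmin; repeat destruct Rle_dec;
  repeat match goal with |- context [Rabs ?x] =>
    destruct (Rcase_abs x); [rewrite (Rabs_left x) by auto|rewrite (Rabs_right x) by auto]
  end; lra.
Qed.

Lemma continuous_clamp_comp (w : R -> C) (a b t : R) : a <= b -> cont_on (Icc a b) w ->
  continuous (fun s => w (clamp a b s)) t.
Proof.
  intros Hab Hw.
  apply (filterlim_comp _ _ _ (clamp a b) w _ (within (Icc a b) (locally (clamp a b t))));
    [|exact (Hw _ (clamp_in a b t Hab))].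
  intros P [eps HP]; exists eps; intros s Hs; apply HP; [|exact (clamp_in a b s Hab)].
  change (Rabs (clamp a b s - clamp a b t) < eps).
  eapply Rle_lt_trans; [apply clamp_lipschitz|exact Hs].
Qed.

Lemma ex_RInt_unit_pieces (f : R -> R) (n : nat) :
  (forall j, (j < n)%nat -> ex_RInt f (INR j) (INR j + 1)) -> ex_RInt f 0 (INR n).
Proof.
  induction n as [|n IH]; intros Hpieces; [apply ex_RInt_point|].
  rewrite S_INR; apply (ex_RInt_Chasles _ _ (INR n)).
  - apply IH; intros j Hj; apply Hpieces; lia.
  - apply Hpieces; lia.
Qed.

Lemma dgamma_pieces (j : nat) : (j < 7)%nat -> exists dG : R -> C,
  (forall x, continuous dG x) /\ forall x, INR j < x < INR j + 1 -> dgamma x = dG x.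
Proof.
  intros Hj.
  destruct j as [|[|[|[|[|[|[|j]]]]]]]; [| | | | | | |lia];
  [exists (fun _ => ((-6, 0) - u0)%C)
  |exists (fun t => (- 6 * PI * sin (PI * t), 6 * PI * cos (PI * t)))
  |exists (fun _ => (v1 - (6, 0))%C)
  |exists (fun _ => (v2 - v1)%C)
  |exists (fun _ => (v3 - v2)%C)
  |exists (fun _ => (v4 - v3)%C)
  |exists (fun _ => (u0 - v4)%C)];
  (split; [intros; continuous_tac|intros x Hx; simpl in Hx; unfold dgamma;
    repeat destruct Rle_dec; try lra; reflexivity]).
Qed.

Lemma ex_RInt_path_integrand (pr : C -> R) (w : R -> C) (t : R) :
  (forall z, continuous pr z) -> cont_on (Icc 0 7) w -> 0 <= t <= 7 ->
  ex_RInt (fun x => pr (w x * dgamma x)%C) 0 t.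
Proof.
  intros Hpr Hw Ht.
  apply (@ex_RInt_Chasles_1 R_CompleteNormedModule _ 0 t 7); [lra|].
  replace 7 with (INR 7) by (simpl; ring).
  apply ex_RInt_unit_pieces; intros j Hj.
  destruct (dgamma_pieces j Hj) as [dG [HdG EdG]].
  assert (Hj7 : INR j + 1 <= 7) by (replace 7 with (INR 6 + 1) by (simpl; ring);
    apply Rplus_le_compat_r, le_INR; lia).
  assert (Hj0 := pos_INR j).
  apply (ex_RInt_ext (fun x => pr (w (clamp 0 7 x) * dG x)%C)).
  - intros x Hx; rewrite Rmin_left, Rmax_right in Hx by lra.
    rewrite clamp_id, EdG by lra; reflexivity.
  - apply (@ex_RInt_continuous R_CompleteNormedModule); intros x _.
    apply (continuous_comp (fun x => (w (clamp 0 7 x) * dG x)%C) pr); [|apply Hpr].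
    assert (Hwc := continuous_clamp_comp w 0 7 x ltac:(lra) Hw).
    assert (HdGx := HdG x); continuous_tac.
Qed.

Lemma Cpath_in_disc u : Cpath u -> Cmod u <= 6.
Proof.
  destruct u as [x y]; rewrite Cpath_iff; intros H; apply Cmod_le_of_sqr; [lra|].
  destruct H as [[Hc _]|[Hx ->]]; [lra|generalize (chord_in_disc x Hx); lra].
Qed.

Lemma P_bound s u : Cmod s < 21/4 -> Cmod u <= 6 -> Cmod (P s u) <= 114.
Proof.
  intros Hs Hu; unfold P.
  assert (Hu0 := Cmod_ge_0 u).
  eapply Rle_trans; [apply Cmod_triangle|].
  eapply Rle_trans; [apply Rplus_le_compat_r, Cmod_triangle|].
  rewrite Cmod_div by (intros E; injection E; lra).
  rewrite !Cmod_mult, Cmod_R, Rabs_right by lra.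
  assert (Cmod u * Cmod u <= 36) by nra.
  assert (Cmod u * Cmod u * Cmod u <= 216) by nra.
  lra.
Qed.

Lemma branch_bound s w t : DDplus (21/4) s -> branch s w -> 0 <= t <= 7 -> Cmod (w t) <= 11.
Proof.
  intros [_ Hs] [_ Hw] Ht.
  assert (H := P_bound s (gamma t) Hs (Cpath_in_disc _ (ex_intro _ t (conj Ht eq_refl)))).
  rewrite <- Hw, Cmod_mult in H by exact Ht.
  assert (0 <= Cmod (w t)) by apply Cmod_ge_0; nra.
Qed.

Lemma im_le_Cmod (z : C) : Rabs (Im z) <= Cmod z.
Proof. eapply Rle_trans; [apply Rmax_r|apply Rmax_Cmod]. Qed.

Lemma dgamma_bound t : Cmod (dgamma t) <= 24.
Proof.
  assert (HPI := PI_4); assert (HPI0 := PI_RGT_0).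
  unfold dgamma; repeat destruct Rle_dec;
    try (unfold u0, v1, v2, v3, v4, Cminus, Cplus, Copp; simpl; apply Cmod_le_of_sqr; lra).
  apply Cmod_le_of_sqr; [lra|].
  assert (Hsc := sin2_cos2 (PI*t)); unfold Rsqr in Hsc.
  replace (- 6 * PI * sin (PI * t) * (- 6 * PI * sin (PI * t))
           + 6 * PI * cos (PI * t) * (6 * PI * cos (PI * t)))
    with (36 * (PI * PI) * (sin (PI * t) * sin (PI * t) + cos (PI * t) * cos (PI * t)))
    by ring.
  rewrite Hsc; nra.
Qed.

(* |w| <= 11 and |gamma'| <= 6 pi <= 24, so both components of J are at most
   7 * 264 = 1848 in absolute value. *)
Lemma J_bound s w t : DDplus (21/4) s -> branch s w -> 0 <= t <= 7 -> Cmod (J w t) <= 4000.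
Proof.
  intros Hs Hb Ht.
  assert (Hint : forall x, 0 <= x <= t -> Cmod (w x * dgamma x)%C <= 264).
  { intros x Hx; rewrite Cmod_mult.
    assert (H1 := branch_bound s w x Hs Hb ltac:(lra)); assert (H2 := dgamma_bound x).
    assert (0 <= Cmod (w x)) by apply Cmod_ge_0; assert (0 <= Cmod (dgamma x)) by apply Cmod_ge_0.
    nra. }
  assert (Hcomp : forall pr : C -> R, (forall z, continuous pr z) ->
            (forall z, Rabs (pr z) <= Cmod z) ->
            Rabs (RInt (fun x => pr (w x * dgamma x)%C) 0 t) <= 1848).
  { intros pr Hpr Hle.
    eapply Rle_trans; [apply abs_RInt_le_const with (M := 264); [lra| |]|].
    - exact (ex_RInt_path_integrand pr w t Hpr (proj1 Hb) Ht).
    - intros x Hx; eapply Rle_trans; [apply Hle|apply Hint; exact Hx].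
    - nra. }
  assert (HA := Hcomp Re continuous_Re re_le_Cmod).
  assert (HB := Hcomp Im continuous_Im im_le_Cmod).
  unfold J, CRInt; apply Cmod_le_of_sqr; [lra|].
  apply Rabs_le_between in HA; apply Rabs_le_between in HB; nra.
Qed.

Theorem corollary1 :
  (forall s r1 r2 r3 : C,
     DDplus (21/4) s -> labelled_roots s r1 r2 r3 ->
     (* (i) *)
     (DDminus 5 r3 /\ DDminus 5 r1 /\ DDplus 5 r2) /\
     (* (ii) *)
     (inside C0hat r2 /\ inside C0hat r3 /\ outside C0hat r1) /\
     (* (iii), first part *)
     (inside Cpath r1 /\ inside Cpath r3 /\ outside Cpath r2)) /\
  (* (iii), second part: alpha < oo *)
  (exists alpha : R,
     forall s : C, DDplus (21/4) s ->
       (exists w, branch s w) /\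
       (forall w, branch s w ->
          forall t, 0 <= t <= 7 -> Cmod (J w t) <= alpha)).
Proof.
  split.
  - intros s r1 r2 r3 Hs HL; split; [|split].
    + exact (labelled_roots_in_half_discs s r1 r2 r3 Hs HL).
    + exact (labelled_roots_vs_C0hat s r1 r2 r3 Hs HL).
    + exact (labelled_roots_vs_Cpath s r1 r2 r3 Hs HL).
  - exists 4000; intros s Hs; split.
    + exact (branch_exists s Hs).
    + intros w Hb t Ht; exact (J_bound s w t Hs Hb Ht).
Qed.
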